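(* The finite derivative test $\mathcal D$ is error-free.
   Context: Let $\Omega=\{0,1\}$, $\Omega^\infty$ the set of infinite sequences $\omega=(\omega_1,\omega_2,\dots)$, and $\omega^t=(\omega_1,\dots,\omega_t)$ (also used for the cylinder set of all sequences with this prefix; $\omega^0=\emptyset$). $\mathcal G_t$ is the $\sigma$-algebra generated by the length-$t$ cylinders and $\mathcal G_\infty$ the $\sigma$-algebra generated by all cylinders. $\Delta(\Omega)$ is the set of probability distributions on $\Omega$; for $p\in\Delta(\Omega)$ and $x\in\Omega$, $p[x]$ is the probability of $x$. A forecasting strategy is a map $f:\bigcup_{t\ge0}(\Omega\times\Delta(\Omega)\times\Delta(\Omega))^t\to\Delta(\Omega)$; $F$ is the set of all forecasting strategies. Given an ordered pair $\vec f=(f,g)\in F\times F$ and $\omega\in\Omega^\infty$, the play path $(\omega,\vec f)$ is defined recursively: $(\omega,\vec f)^0=\emptyset$ and its $t$-th entry is $(\omega_t,f((\omega,\vec f)^{t-1}),g((\omega,\vec f)^{t-1}))$, where $(\omega,\vec f)^t$ is the prefix of length $t$. The pair $\vec f$ induces two probability measures on $(\Omega^\infty,\mathcal G_\infty)$, again denoted $f$ and $g$ (they depend on the pair), determined by $f(\omega^t)=\prod_{n=1}^t f((\omega,\vec f)^{n-1})[\omega_n]$ and $g(\omega^t)=\prod_{n=1}^t g((\omega,\vec f)^{n-1})[\omega_n]$. A (cardinal comparison) test is a sequence $T=(T_t)_{t>0}$ of $\mathcal G_t$-measurable functions $T_t:(\Omega\times\Delta(\Omega)\times\Delta(\Omega))^\infty\to[0,1]$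 (depending only on the first $t$ entries); write $T_t(\omega,\vec f)=T_t((\omega,\vec f))$ and $T(\omega,\vec f)=\lim_t T_t(\omega,\vec f)$ whenever the limit exists. For $\epsilon\in(0,1)$ let $L^{\vec f}_{T,\epsilon}=\{\omega:T(\omega,\vec f)\text{ exists and }>\epsilon\}$ and $R^{\vec f}_{T,\epsilon}=\{\omega:T(\omega,\vec f)\text{ exists and }<\epsilon\}$. $T$ is error-free if for all $\vec f=(f,g)\in F\times F$ and every measurable $A\subseteq\Omega^\infty$: for all $\epsilon\in(0,\frac12)$, $f(A\cap R^{\vec f}_{T,\epsilon})\le\frac{\epsilon}{1-\epsilon}\,g(A\cap R^{\vec f}_{T,\epsilon})$, and for all $\epsilon\in(\frac12,1)$, $g(A\cap L^{\vec f}_{T,\epsilon})\le\frac{1-\epsilon}{\epsilon}\,f(A\cap L^{\vec f}_{T,\epsilon})$ (with $f,g$ the measures induced by $\vec f$). The finite derivative test $\mathcal D$ is defined for $t\ge0$ by $\mathcal D_{t+1}(\omega,\vec f)=\frac{f(\omega^t)}{f(\omega^t)+g(\omega^t)}$ if $f(\omega^t)>0$ or $g(\omega^t)>0$, and $\frac12$ otherwise. *)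

From Stdlib Require Import Reals Lra List ClassicalEpsilon.
Import ListNotations.
Open Scope R_scope.

(** Omega = {0,1} is represented by bool (true = 1).
    Delta(Omega): a probability distribution on bool, given by the probability
    of [true], a real in [0,1]. *)
Definition Dist := { p : R | 0 <= p <= 1 }.

Definition prob (d : Dist) (x : bool) : R :=
  if x then proj1_sig d else 1 - proj1_sig d.

(** An entry of a play path: (omega_t, forecast of f, forecast of g). *)
Definition Entry := (bool * Dist * Dist)%type.

(** Finite histories are lists in chronological order (head = first entry). *)
Definition Strategy := list Entry -> Dist.

(** Infinite sequences omega = (omega_1, omega_2, ...), indexed from 0:
    omega_{n+1} = w n. *)
Definition Seq := nat -> bool.

Fixpoint hist (f g : Strategy) (w : Seq) (t : nat) : list Entry :=
  match t with
  | O => []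
  | S t' => let h := hist f g w t' in h ++ [(w t', f h, g h)]
  end.

Fixpoint prodR (n : nat) (F : nat -> R) : R :=
  match n with
  | O => 1
  | S n' => prodR n' F * F n'
  end.

Definition ext (s : list bool) : Seq := fun n => nth n s false.
Definition cyl (s : list bool) (w : Seq) : Prop :=
  forall n, (n < length s)%nat -> w n = nth n s false.

Definition cylprob (which f g : Strategy) (s : list bool) : R :=
  prodR (length s) (fun n => prob (which (hist f g (ext s) n)) (ext s n)).

Inductive measurable : (Seq -> Prop) -> Prop :=
| meas_cyl : forall s, measurable (cyl s)
| meas_compl : forall A, measurable A -> measurable (fun w => ~ A w)
| meas_union : forall A : nat -> Seq -> Prop,
    (forall k, measurable (A k)) -> measurable (fun w => exists k, A k w)
| meas_ext : forall A B, (forall w, A w <-> B w) -> measurable A -> measurable B.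

(** Countable covers by cylinders (None = empty piece). *)
Definition Cover := nat -> option (list bool).

Definition covers (c : Cover) (A : Seq -> Prop) : Prop :=
  forall w, A w -> exists k s, c k = Some s /\ cyl s w.

Definition cover_term (which f g : Strategy) (c : Cover) (k : nat) : R :=
  match c k with Some s => cylprob which f g s | None => 0 end.

Definition is_glb (E : R -> Prop) (m : R) : Prop :=
  (forall x, E x -> m <= x) /\
  (forall m', (forall x, E x -> m' <= x) -> m' <= m).

(** The measure induced on G_infinity (Caratheodory extension of the
    cylinder premeasure), given by the outer measure
    inf { sum_k P(cyl s_k) : A subset of the union of the cyl s_k }. *)
Definition measure (which f g : Strategy) (A : Seq -> Prop) : R :=
  epsilon (inhabits 0)
    (is_glb (fun x => exists c, covers c A /\ infinite_sum (cover_term which f g c) x)).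

(** A test: T_t(omega, f) = T applied to the length-t prefix of the play path
    (so T_t depends only on the first t entries). *)
Definition Test := list Entry -> R.

Definition test_limit (T : Test) (f g : Strategy) (w : Seq) (l : R) : Prop :=
  Un_cv (fun t => T (hist f g w (S t))) l.

Definition Lset (T : Test) (f g : Strategy) (eps : R) (w : Seq) : Prop :=
  exists l, test_limit T f g w l /\ l > eps.
Definition Rset (T : Test) (f g : Strategy) (eps : R) (w : Seq) : Prop :=
  exists l, test_limit T f g w l /\ l < eps.

Definition error_free (T : Test) : Prop :=
  forall (f g : Strategy) (A : Seq -> Prop), measurable A ->
    (forall eps, 0 < eps < 1/2 ->
       measure f f g (fun w => A w /\ Rset T f g eps w)
       <= eps / (1 - eps) * measure g f g (fun w => A w /\ Rset T f g eps w)) /\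
    (forall eps, 1/2 < eps < 1 ->
       measure g f g (fun w => A w /\ Lset T f g eps w)
       <= (1 - eps) / eps * measure f f g (fun w => A w /\ Lset T f g eps w)).

(** The finite derivative test: on a history h of length t+1,
    D_{t+1} = f(omega^t) / (f(omega^t) + g(omega^t)) (or 1/2 if both are 0),
    where f(omega^t), g(omega^t) are the products of the forecasts recorded
    in the first t entries of h. *)
Definition fprod (h : list Entry) : R :=
  fold_right (fun e acc => prob (snd (fst e)) (fst (fst e)) * acc) 1 h.
Definition gprod (h : list Entry) : R :=
  fold_right (fun e acc => prob (snd e) (fst (fst e)) * acc) 1 h.

Definition derivative_test : Test := fun h =>
  let h' := removelast h in
  let F := fprod h' in
  let G := gprod h' in
  if Rlt_dec 0 F then F / (F + G)
  else if Rlt_dec 0 G then F / (F + G) else 1/2.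

(** Write [P_f(s)], [P_g(s)] for the probabilities of the cylinder of a finite
  word [s] under the measures induced by the pair of strategies [(f,g)]; the
  value of the derivative test after [t] outcomes is
  [D(P_f(s), P_g(s))] with [s] the first [t] outcomes and
  [D(F,G) = F/(F+G)].  If the limit of the test along [w] is [< eps < 1/2],
  then infinitely many prefixes [s] of [w] satisfy
  [P_f(s) <= eps/(1-eps) * P_g(s)] (and symmetrically for [> eps > 1/2]).

  So it suffices to prove the comparison principle [measure_le_of_frequently]:
  if every [w] in [X] has infinitely many prefixes [s] with
  [P1(s) <= c * P2(s)], then [mu1(X) <= c * mu2(X)], the measures being the
  outer measures "inf of the cylinder-cover sums".  Given a cover of [X] by
  cylinders [s_k], replace each [s_k] by its minimal extensions [s_k ++ u]
  satisfying the comparison.  These extensions still cover [X]; they form a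
  prefix-free family below [s_k], so their [P2]-mass is at most [P2(s_k)]
  (a Kraft inequality for the splitting premeasure [P2]); and on each of them
  [P1 <= c * P2].  Hence every [P2]-cover sum [x] yields a [P1]-cover sum
  [<= c * x].
*)
From Stdlib Require Import Reals Lra Lia List PArith Cantor Wf_nat FinFun.
From Stdlib Require Import Classical ClassicalEpsilon FunctionalExtensionality.
Import ListNotations.
Open Scope R_scope.

(** ** Play paths and cylinder probabilities *)

Lemma hist_ext f g w w' n :
  (forall i, (i < n)%nat -> w i = w' i) -> hist f g w n = hist f g w' n.
Proof.
  induction n as [|n IH]; intros H; simpl; [reflexivity|].
  rewrite IH by (intros; apply H; lia). rewrite H by lia. reflexivity.
Qed.

Lemma prodR_ext n F F' :
  (forall i, (i < n)%nat -> F i = F' i) -> prodR n F = prodR n F'.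
Proof.
  induction n as [|n IH]; intros H; simpl; [reflexivity|].
  rewrite IH by (intros; apply H; lia). rewrite H by lia. reflexivity.
Qed.

Lemma prob_range d x : 0 <= prob d x <= 1.
Proof. destruct d as [p Hp]; destruct x; simpl; lra. Qed.

Lemma cylprob_nonneg which f g s : 0 <= cylprob which f g s.
Proof.
  unfold cylprob. induction (length s); simpl; [lra|].
  apply Rmult_le_pos; [assumption | apply prob_range].
Qed.

Lemma ext_app_lt s u i : (i < length s)%nat -> ext (s ++ u) i = ext s i.
Proof. intros Hi; unfold ext; rewrite app_nth1; auto. Qed.

Lemma cylprob_snoc which f g s b :
  cylprob which f g (s ++ [b]) =
  cylprob which f g s * prob (which (hist f g (ext s) (length s))) b.
Proof.
  unfold cylprob. rewrite length_app, Nat.add_1_r; simpl. f_equal.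
  - apply prodR_ext; intros i Hi. rewrite ext_app_lt by exact Hi.
    do 2 f_equal. apply hist_ext; intros; apply ext_app_lt; lia.
  - unfold ext at 2. rewrite app_nth2, Nat.sub_diag by lia. simpl.
    do 2 f_equal. apply hist_ext; intros; apply ext_app_lt; lia.
Qed.

Lemma cylprob_split which f g s :
  cylprob which f g (s ++ [false]) + cylprob which f g (s ++ [true])
  = cylprob which f g s.
Proof. rewrite !cylprob_snoc. unfold prob. ring. Qed.

Definition prefix (w : Seq) (t : nat) : list bool := map w (seq 0 t).

Lemma prefix_length w t : length (prefix w t) = t.
Proof. unfold prefix; rewrite length_map, length_seq; reflexivity. Qed.

Lemma ext_prefix w t i : (i < t)%nat -> ext (prefix w t) i = w i.
Proof.
  intros Hi; unfold ext, prefix.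
  rewrite nth_indep with (d' := w 0%nat) by (rewrite length_map, length_seq; exact Hi).
  rewrite map_nth, seq_nth; auto.
Qed.

Lemma cyl_prefix w t : cyl (prefix w t) w.
Proof.
  intros n Hn. rewrite prefix_length in Hn.
  change (nth n (prefix w t) false) with (ext (prefix w t) n).
  rewrite ext_prefix; auto.
Qed.

Lemma prefix_of_cyl s w : cyl s w -> prefix w (length s) = s.
Proof.
  intros H. apply nth_ext with (d := false) (d' := false); [apply prefix_length|].
  intros n Hn. rewrite prefix_length in Hn. rewrite <- (H n Hn).
  apply (ext_prefix w (length s) n Hn).
Qed.

Lemma prefix_add w a b : prefix w (a + b) = prefix w a ++ map w (seq a b).
Proof. unfold prefix. rewrite seq_app, map_app. reflexivity. Qed.

Lemma fold_prod_snoc (F : Entry -> R) l e :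
  fold_right (fun e acc => F e * acc) 1 (l ++ [e])
  = fold_right (fun e acc => F e * acc) 1 l * F e.
Proof. induction l as [|a l IH]; simpl; [ring|]. rewrite IH; ring. Qed.

(** The product of the forecasts of one player recorded along the play path
    is the probability of the prefix under that player's measure. *)
Lemma forecast_product_hist (which : Strategy) (forecast : Entry -> Dist) f g w t :
  (forall h b, forecast (b, f h, g h) = which h) ->
  fold_right (fun e acc => prob (forecast e) (fst (fst e)) * acc) 1 (hist f g w t)
  = cylprob which f g (prefix w t).
Proof.
  intros Hforecast. unfold cylprob; rewrite prefix_length.
  transitivity (prodR t (fun n => prob (which (hist f g w n)) (w n))).
  - induction t as [|t IH]; [reflexivity|].
    cbn [hist prodR]. rewrite fold_prod_snoc, IH; simpl. rewrite Hforecast. reflexivity.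
  - apply prodR_ext; intros i Hi. rewrite ext_prefix by exact Hi.
    do 2 f_equal. apply hist_ext; intros; rewrite ext_prefix by lia; reflexivity.
Qed.

Definition derivative_value (F G : R) : R :=
  if Rlt_dec 0 F then F / (F + G) else if Rlt_dec 0 G then F / (F + G) else 1/2.

Lemma derivative_test_hist f g w t :
  derivative_test (hist f g w (S t))
  = derivative_value (cylprob f f g (prefix w t)) (cylprob g f g (prefix w t)).
Proof.
  unfold derivative_test, fprod, gprod. simpl hist. rewrite removelast_last.
  rewrite (forecast_product_hist f (fun e => snd (fst e))) by reflexivity.
  rewrite (forecast_product_hist g snd) by reflexivity.
  reflexivity.
Qed.

Lemma derivative_value_below F G eps : 0 <= F -> 0 <= G -> 0 < eps < 1/2 ->
  derivative_value F G < eps -> F <= eps / (1 - eps) * G.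
Proof.
  unfold derivative_value; intros HF HG He H.
  apply Rmult_le_reg_l with (1 - eps); [lra|].
  replace ((1 - eps) * (eps / (1 - eps) * G)) with (eps * G) by (field; lra).
  destruct (Rlt_dec 0 F).
  - assert (E : F = F / (F + G) * (F + G)) by (field; lra).
    set (q := F / (F + G)) in *. nra.
  - nra.
Qed.

Lemma derivative_value_above F G eps : 0 <= F -> 0 <= G -> 1/2 < eps < 1 ->
  eps < derivative_value F G -> G <= (1 - eps) / eps * F.
Proof.
  unfold derivative_value; intros HF HG He H.
  apply Rmult_le_reg_l with eps; [lra|].
  replace (eps * ((1 - eps) / eps * F)) with ((1 - eps) * F) by (field; lra).
  destruct (Rlt_dec 0 F).
  - assert (E : F = F / (F + G) * (F + G)) by (field; lra).
    set (q := F / (F + G)) in *. nra.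
  - assert (F = 0) by lra. subst F.
    destruct (Rlt_dec 0 G); [rewrite Rdiv_0_l in H|]; lra.
Qed.

Lemma limit_below_frequently (u : nat -> R) l eps :
  Un_cv u l -> l < eps -> forall t0, exists t, (t0 <= t)%nat /\ u t < eps.
Proof.
  intros Hu Hl t0. destruct (Hu (eps - l)) as [N HN]; [lra|].
  exists (Nat.max t0 N). split; [lia|].
  specialize (HN (Nat.max t0 N) ltac:(lia)). unfold Rdist in HN.
  apply Rabs_def2 in HN. lra.
Qed.

Lemma limit_above_frequently (u : nat -> R) l eps :
  Un_cv u l -> eps < l -> forall t0, exists t, (t0 <= t)%nat /\ eps < u t.
Proof.
  intros Hu Hl t0. destruct (Hu (l - eps)) as [N HN]; [lra|].
  exists (Nat.max t0 N). split; [lia|].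
  specialize (HN (Nat.max t0 N) ltac:(lia)). unfold Rdist in HN.
  apply Rabs_def2 in HN. lra.
Qed.

Definition lsum {A} (F : A -> R) (l : list A) : R :=
  fold_right (fun a acc => F a + acc) 0 l.

Lemma lsum_app {A} (F : A -> R) l l' : lsum F (l ++ l') = lsum F l + lsum F l'.
Proof. induction l as [|a l IH]; simpl; [ring|]. unfold lsum in *; simpl; rewrite IH; ring. Qed.

Lemma lsum_le {A} (F G : A -> R) l :
  (forall a, In a l -> F a <= G a) -> lsum F l <= lsum G l.
Proof.
  induction l as [|a l IH]; simpl; intros H; [lra|].
  assert (F a <= G a) by auto. assert (lsum F l <= lsum G l) by auto. lra.
Qed.

Lemma lsum_scal {A} (F : A -> R) c l : lsum (fun a => c * F a) l = c * lsum F l.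
Proof. induction l as [|a l IH]; simpl; [ring|]. unfold lsum in *; simpl; rewrite IH; ring. Qed.

Lemma lsum_map {A B} (F : B -> R) (h : A -> B) l : lsum (fun a => F (h a)) l = lsum F (map h l).
Proof. induction l as [|a l IH]; simpl; [reflexivity|]. unfold lsum in *; simpl; rewrite IH; reflexivity. Qed.

Lemma lsum_filter {A} (F : A -> R) (b : A -> bool) l :
  lsum (fun a => if b a then F a else 0) l = lsum F (filter b l).
Proof.
  induction l as [|a l IH]; simpl; [reflexivity|].
  unfold lsum in *; simpl. rewrite IH. destruct (b a); simpl; ring.
Qed.

Lemma sum_f_R0_lsum (F : nat -> R) N : sum_f_R0 F N = lsum F (seq 0 (S N)).
Proof.
  induction N as [|N IH]; [unfold lsum; simpl; ring|].
  rewrite seq_S, lsum_app. simpl sum_f_R0. rewrite IH. unfold lsum at 3; simpl. ring.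
Qed.

(** ** A Kraft inequality for splitting premeasures on words *)

Definition prefix_free (L : list (list bool)) : Prop :=
  forall u v, In u L -> In (u ++ v) L -> v = [].

Definition tails (b : bool) (L : list (list bool)) : list (list bool) :=
  flat_map (fun u => match u with
                     | c :: u' => if Bool.eqb c b then [u'] else []
                     | [] => [] end) L.

Lemma tails_in b L u : In u (tails b L) -> In (b :: u) L.
Proof.
  induction L as [|a L IH]; simpl; [tauto|]. intros H. apply in_app_or in H as [H|H].
  - destruct a as [|c a]; [destruct H|]. destruct (Bool.eqb c b) eqn:E; [|destruct H].
    apply Bool.eqb_prop in E; subst. destruct H as [H|[]]; subst; auto.
  - auto.
Qed.

Lemma tails_nodup b L : NoDup L -> NoDup (tails b L).
Proof.
  induction L as [|a L IH]; simpl; intros H; [constructor|]. inversion H; subst.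
  destruct a as [|c a]; simpl; auto. destruct (Bool.eqb c b) eqn:E; simpl; auto.
  apply Bool.eqb_prop in E; subst. constructor; auto.
  intros Hin; apply tails_in in Hin; auto.
Qed.

Lemma tails_prefix_free b L : prefix_free L -> prefix_free (tails b L).
Proof.
  intros H u v Hu Huv. apply tails_in in Hu, Huv. exact (H (b :: u) v Hu Huv).
Qed.

Lemma lsum_tails (F : list bool -> R) L : (forall u, In u L -> u <> []) ->
  lsum F L = lsum (fun u => F (false :: u)) (tails false L)
             + lsum (fun u => F (true :: u)) (tails true L).
Proof.
  induction L as [|a L IH]; intros H; [unfold lsum; simpl; ring|].
  destruct a as [|c a]; [exfalso; apply (H []); simpl; auto|].
  unfold tails in *; cbn [flat_map].
  change (lsum F ((c :: a) :: L)) with (F (c :: a) + lsum F L).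
  rewrite !lsum_app, IH by (intros u Hu; apply H; simpl; auto).
  destruct c; simpl; unfold lsum; simpl; ring.
Qed.

Lemma lsum_nil_only (F : list bool -> R) L : NoDup L -> (forall u, In u L -> u = []) ->
  0 <= F [] -> lsum F L <= F [].
Proof.
  intros ND H H0. destruct L as [|a [|b L]]; unfold lsum; simpl.
  - lra.
  - rewrite (H a) by (simpl; auto). lra.
  - exfalso. inversion ND as [|? ? Hab]; subst. apply Hab.
    rewrite (H a), (H b) by (simpl; auto). simpl; auto.
Qed.

Section Kraft.
Variable P : list bool -> R.
Hypothesis P_nonneg : forall s, 0 <= P s.
Hypothesis P_split : forall s, P (s ++ [false]) + P (s ++ [true]) = P s.

Lemma kraft M : forall s L, NoDup L -> prefix_free L ->
  (forall u, In u L -> (length u <= M)%nat) ->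
  lsum (fun u => P (s ++ u)) L <= P s.
Proof.
  assert (Hnil : forall s L, NoDup L -> (forall u, In u L -> u = []) ->
            lsum (fun u => P (s ++ u)) L <= P s).
  { intros s L ND H. replace (P s) with (P (s ++ [])) by (rewrite app_nil_r; reflexivity).
    apply (lsum_nil_only (fun u => P (s ++ u))); auto. }
  induction M as [|M IH]; intros s L ND PF Hlen.
  - apply Hnil; auto. intros u Hu. specialize (Hlen u Hu).
    destruct u; simpl in Hlen; [reflexivity | lia].
  - destruct (in_dec (list_eq_dec Bool.bool_dec) [] L) as [Hin|Hnin].
    + apply Hnil; auto. intros u Hu. exact (PF [] u Hin Hu).
    + rewrite lsum_tails by (intros u Hu E; subst; auto).
      rewrite <- P_split.
      assert (Hb : forall b, lsum (fun u => P (s ++ b :: u)) (tails b L) <= P (s ++ [b])).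
      { intros b.
        replace (fun u => P (s ++ b :: u)) with (fun u => P ((s ++ [b]) ++ u))
          by (apply functional_extensionality; intros u; rewrite <- app_assoc; reflexivity).
        apply IH; [apply tails_nodup; auto | apply tails_prefix_free; auto |].
        intros u Hu. apply tails_in, Hlen in Hu. simpl in Hu; lia. }
      pose proof (Hb false). pose proof (Hb true). lra.
Qed.
End Kraft.

(** The refined cover is indexed by pairs [(k, u)]: the index [k] of a cylinder
  of the original cover and a word [u] extending it.  We enumerate these
  pairs bijectively by the naturals. *)

Fixpoint word_of_pos (p : positive) : list bool :=
  match p with
  | xH => []
  | xO p => false :: word_of_pos p
  | xI p => true :: word_of_pos p
  end.

Fixpoint pos_of_word (l : list bool) : positive :=
  match l with
  | [] => xH
  | false :: l => xO (pos_of_word l)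
  | true :: l => xI (pos_of_word l)
  end.

Lemma word_of_pos_of_word l : word_of_pos (pos_of_word l) = l.
Proof. induction l as [|[] l IH]; simpl; congruence. Qed.

Lemma pos_of_word_of_pos p : pos_of_word (word_of_pos p) = p.
Proof. induction p; simpl; congruence. Qed.

Definition word (n : nat) : list bool := word_of_pos (Pos.of_succ_nat n).

Lemma word_inj n m : word n = word m -> n = m.
Proof.
  unfold word; intros H. apply SuccNat2Pos.inj.
  rewrite <- (pos_of_word_of_pos (Pos.of_succ_nat n)), <- (pos_of_word_of_pos (Pos.of_succ_nat m)), H.
  reflexivity.
Qed.

Lemma word_surj l : exists n, word n = l.
Proof.
  exists (Nat.pred (Pos.to_nat (pos_of_word l))). unfold word.
  rewrite SuccNat2Pos.inv with (p := pos_of_word l); [apply word_of_pos_of_word|].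
  pose proof (Pos2Nat.is_pos (pos_of_word l)). lia.
Qed.

Definition decode (n : nat) : nat * list bool :=
  let (k, m) := Cantor.of_nat n in (k, word m).

Lemma decode_inj : Injective decode.
Proof.
  intros n m. unfold decode.
  rewrite <- (Cantor.cancel_to_of n), <- (Cantor.cancel_to_of m).
  destruct (Cantor.of_nat n) as [k i], (Cantor.of_nat m) as [k' i'].
  rewrite !Cantor.cancel_of_to. intros E. injection E as -> E.
  apply word_inj in E. subst. reflexivity.
Qed.

Lemma decode_surj p : exists n, decode n = p.
Proof.
  destruct p as [k u]. destruct (word_surj u) as [m Hm].
  exists (Cantor.to_nat (k, m)). unfold decode. rewrite Cantor.cancel_of_to, Hm.
  reflexivity.
Qed.

Section Grouping.
Variable B : Type.

Definition sel (k : nat) (l : list (nat * B)) : list B :=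
  flat_map (fun p => if Nat.eqb (fst p) k then [snd p] else []) l.
Definition rest (k : nat) (l : list (nat * B)) : list (nat * B) :=
  filter (fun p => negb (Nat.eqb (fst p) k)) l.

Lemma sel_in k l u : In u (sel k l) -> In (k, u) l.
Proof.
  induction l as [|[a b] l IH]; simpl; [tauto|]. intros H.
  apply in_app_or in H as [H|H]; auto.
  destruct (Nat.eqb_spec a k); [|destruct H]. subst.
  destruct H as [H|[]]; subst; auto.
Qed.

Lemma sel_nodup k l : NoDup l -> NoDup (sel k l).
Proof.
  induction l as [|[a b] l IH]; simpl; intros H; [constructor|]. inversion H; subst.
  destruct (Nat.eqb_spec a k); simpl; auto. subst.
  constructor; auto. intros Hin; apply sel_in in Hin; auto.
Qed.

Lemma lsum_sel (w : nat * B -> R) k l :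
  lsum w l = lsum (fun u => w (k, u)) (sel k l) + lsum w (rest k l).
Proof.
  induction l as [|[a b] l IH]; [unfold lsum; simpl; ring|].
  unfold sel, rest in *; cbn [flat_map filter fst snd].
  change (lsum w ((a, b) :: l)) with (w (a, b) + lsum w l). rewrite lsum_app, IH.
  destruct (Nat.eqb_spec a k); simpl; unfold lsum; simpl; [subst|]; ring.
Qed.

Lemma lsum_group (w : nat * B -> R) (ct : nat -> R) (V : nat -> B -> Prop) :
  (forall k L, NoDup L -> (forall u, In u L -> V k u) ->
     lsum (fun u => w (k, u)) L <= ct k) ->
  forall ks l, NoDup l -> (forall p, In p l -> In (fst p) ks /\ V (fst p) (snd p)) ->
  lsum w l <= lsum ct ks.
Proof.
  intros Hct ks. induction ks as [|k ks IH]; intros l ND Hl.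
  - destruct l as [|p l]; [unfold lsum; simpl; lra|].
    destruct (Hl p (or_introl eq_refl)) as [[] _].
  - rewrite (lsum_sel w k l). unfold lsum at 3; simpl.
    assert (lsum (fun u => w (k, u)) (sel k l) <= ct k).
    { apply Hct; [apply sel_nodup; auto|]. intros u Hu. apply sel_in, Hl in Hu. apply Hu. }
    assert (lsum w (rest k l) <= lsum ct ks).
    { apply IH; [apply NoDup_filter; auto|].
      intros p Hp. apply filter_In in Hp as [Hp Hk]. destruct (Hl p Hp) as [[E|Hin] HV].
      - rewrite E, Nat.eqb_refl in Hk. discriminate.
      - auto. }
    fold (lsum ct ks). lra.
Qed.
End Grouping.

Definition cover_sums (which f g : Strategy) (X : Seq -> Prop) : R -> Prop :=
  fun x => exists c, covers c X /\ infinite_sum (cover_term which f g c) x.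

Lemma cover_term_nonneg which f g c k : 0 <= cover_term which f g c k.
Proof. unfold cover_term. destruct (c k); [apply cylprob_nonneg | lra]. Qed.

Lemma cover_sums_nonneg which f g X x : cover_sums which f g X x -> 0 <= x.
Proof.
  intros [c [_ H]]. pose proof (sum_incr _ 0 x H (cover_term_nonneg which f g c)).
  simpl in H0. pose proof (cover_term_nonneg which f g c 0). lra.
Qed.

(** The whole space is a single cylinder, so every set has a cover. *)
Lemma cover_sums_inhabited which f g X : exists x, cover_sums which f g X x.
Proof.
  set (c := (fun n => match n with O => Some [] | _ => None end) : Cover).
  exists 1, c. split.
  - intros w _. exists 0%nat, []. split; [reflexivity|]. intros n Hn; simpl in Hn; lia.
  - assert (Hs : forall n, sum_f_R0 (cover_term which f g c) n = 1).
    { induction n as [|n IH]; simpl; [unfold cover_term, cylprob; simpl; ring|].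
      rewrite IH. unfold cover_term; simpl; ring. }
    intros eps Heps. exists 0%nat. intros n _. rewrite Hs. unfold Rdist.
    rewrite Rminus_diag, Rabs_R0. lra.
Qed.

Lemma measure_glb which f g X : is_glb (cover_sums which f g X) (measure which f g X).
Proof.
  unfold measure. apply (epsilon_spec (inhabits 0) (is_glb _)).
  set (E := fun y => cover_sums which f g X (- y)).
  assert (Hb : bound E) by (exists 0; intros y Hy; apply cover_sums_nonneg in Hy; lra).
  assert (Hi : exists y, E y).
  { destruct (cover_sums_inhabited which f g X) as [x Hx].
    exists (- x). unfold E. rewrite Ropp_involutive; exact Hx. }
  destruct (completeness E Hb Hi) as [m [Hub Hl]]. exists (- m). split.
  - intros x Hx. assert (E (- x)) by (unfold E; rewrite Ropp_involutive; exact Hx).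
    specialize (Hub _ H). lra.
  - intros m' Hm'. assert (m <= - m') by (apply Hl; intros y Hy; specialize (Hm' _ Hy); lra).
    lra.
Qed.

Lemma measure_compare w1 w2 f g X c : 0 < c ->
  (forall x, cover_sums w2 f g X x -> exists y, cover_sums w1 f g X y /\ y <= c * x) ->
  measure w1 f g X <= c * measure w2 f g X.
Proof.
  intros Hc H. destruct (measure_glb w1 f g X) as [H1 _].
  destruct (measure_glb w2 f g X) as [_ H2].
  assert (measure w1 f g X / c <= measure w2 f g X).
  { apply H2. intros x Hx. destruct (H x Hx) as [y [Hy Hyx]]. specialize (H1 y Hy).
    apply Rmult_le_reg_r with c; [exact Hc|].
    replace (measure w1 f g X / c * c) with (measure w1 f g X) by (field; lra). lra. }
  replace (measure w1 f g X) with (measure w1 f g X / c * c) by (field; lra). nra.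
Qed.

Lemma series_bounded (F : nat -> R) bound :
  (forall n, 0 <= F n) -> (forall N, sum_f_R0 F N <= bound) ->
  exists y, infinite_sum F y /\ y <= bound.
Proof.
  intros Hpos Hb.
  assert (Hg : Un_growing (sum_f_R0 F)).
  { intros n. simpl. pose proof (Hpos (S n)). lra. }
  assert (Hub : has_ub (sum_f_R0 F)) by (exists bound; intros y [i ->]; auto).
  destruct (growing_cv _ Hg Hub) as [y Hy]. exists y. split; [exact Hy|].
  apply Rle_cv_lim with (sum_f_R0 F) (fun _ => bound); auto.
  intros eps Heps. exists 0%nat. intros n _. unfold Rdist. rewrite Rminus_diag, Rabs_R0. exact Heps.
Qed.

(** ** Refining a cover along a property of prefixes *)

Lemma le_list_max (l : list nat) x : In x l -> (x <= list_max l)%nat.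
Proof.
  intros Hx. assert (Hall : Forall (fun k => k <= list_max l)%nat l) by (apply list_max_le; lia).
  rewrite Forall_forall in Hall. auto.
Qed.

Lemma firstn_seq j a b : (j <= b)%nat -> firstn j (seq a b) = seq a j.
Proof.
  revert a b; induction j as [|j IH]; intros a b H; [reflexivity|].
  destruct b as [|b]; [lia|]. simpl. f_equal. apply IH; lia.
Qed.

Lemma least_time (Q : nat -> Prop) t0 : (exists t, (t0 <= t)%nat /\ Q t) ->
  exists t, (t0 <= t)%nat /\ Q t /\ forall t', (t0 <= t' < t)%nat -> ~ Q t'.
Proof.
  intros Hex.
  destruct (dec_inh_nat_subset_has_unique_least_element (fun t => t0 <= t /\ Q t)%nat)
    as [t [[[Ht HQ] Hmin] _]]; [intros n; apply classic | exact Hex |].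
  exists t. split; [exact Ht|]. split; [exact HQ|].
  intros t' Ht' HQ'. specialize (Hmin t' (conj (proj1 Ht') HQ')). lia.
Qed.

Section Refinement.
Variable cond : list bool -> Prop.

Definition firsthit (s u : list bool) : Prop :=
  cond (s ++ u) /\ forall j, (j < length u)%nat -> ~ cond (s ++ firstn j u).

Lemma firsthit_prefix_free s L : (forall u, In u L -> firsthit s u) -> prefix_free L.
Proof.
  intros H u v Hu Huv. destruct v as [|b v]; [reflexivity|]. exfalso.
  destruct (H u Hu) as [Hc _]. destruct (H _ Huv) as [_ Hmin].
  apply (Hmin (length u)); [rewrite length_app; simpl; lia|].
  rewrite firstn_app, firstn_all, Nat.sub_diag, app_nil_r. exact Hc.
Qed.

Variable c0 : Cover.

Definition hit (p : nat * list bool) : bool :=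
  match c0 (fst p) with
  | Some s => if excluded_middle_informative (firsthit s (snd p)) then true else false
  | None => false
  end.

Definition piece (p : nat * list bool) : option (list bool) :=
  match c0 (fst p) with Some s => Some (s ++ snd p) | None => None end.

Definition piece_prob (which f g : Strategy) (p : nat * list bool) : R :=
  match piece p with Some s => cylprob which f g s | None => 0 end.

Definition refine : Cover :=
  fun n => if hit (decode n) then piece (decode n) else None.

Lemma cover_term_refine which f g n :
  cover_term which f g refine n
  = if hit (decode n) then piece_prob which f g (decode n) else 0.
Proof. unfold cover_term, refine, piece_prob. destruct (hit (decode n)); reflexivity. Qed.

Lemma refine_covers (X : Seq -> Prop) :
  (forall om, X om -> forall t0, exists t, (t0 <= t)%nat /\ cond (prefix om t)) ->
  covers c0 X -> covers refine X.
Proof.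
  intros Hfreq Hcov om Hom. destruct (Hcov om Hom) as [k [s [Hk Hs]]].
  destruct (least_time _ (length s) (Hfreq om Hom (length s))) as [t [Ht [Hct Hmin]]].
  set (u := map om (seq (length s) (t - length s))).
  assert (Hlen : length u = (t - length s)%nat) by (unfold u; rewrite length_map, length_seq; reflexivity).
  assert (Hsu : forall j, (j <= t - length s)%nat -> s ++ firstn j u = prefix om (length s + j)).
  { intros j Hj. unfold u. rewrite firstn_map, firstn_seq by exact Hj.
    rewrite prefix_add, prefix_of_cyl by exact Hs. reflexivity. }
  assert (Hsu_all : s ++ u = prefix om t).
  { rewrite <- (firstn_all u) at 1. rewrite Hlen, Hsu by lia. f_equal; lia. }
  assert (Hhit : firsthit s u).
  { split; [rewrite Hsu_all; exact Hct|].
    intros j Hj. rewrite Hlen in Hj. rewrite Hsu by lia. apply Hmin; lia. }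
  destruct (decode_surj (k, u)) as [n Hn]. exists n, (s ++ u). split.
  - unfold refine, hit, piece. rewrite Hn; simpl. rewrite Hk.
    destruct (excluded_middle_informative _); [reflexivity | contradiction].
  - rewrite Hsu_all. apply cyl_prefix.
Qed.

Lemma refine_term_le w1 w2 f g c :
  (forall s, cond s -> cylprob w1 f g s <= c * cylprob w2 f g s) ->
  forall n, cover_term w1 f g refine n <= c * cover_term w2 f g refine n.
Proof.
  intros Hcond n. rewrite !cover_term_refine. unfold hit, piece_prob, piece.
  destruct (c0 (fst (decode n))) as [s|]; [|lra].
  destruct (excluded_middle_informative _) as [[Hs _]|]; [exact (Hcond _ Hs) | lra].
Qed.

(** By the Kraft inequality, each partial sum of the refined cover is bounded
    by a partial sum of the original cover. *)
Lemma refine_partial_sums which f g N : exists K,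
  sum_f_R0 (cover_term which f g refine) N <= sum_f_R0 (cover_term which f g c0) K.
Proof.
  set (l := filter hit (map decode (seq 0 (S N)))).
  exists (list_max (map fst l)).
  assert (E : sum_f_R0 (cover_term which f g refine) N = lsum (piece_prob which f g) l).
  { rewrite sum_f_R0_lsum.
    transitivity (lsum (fun n => if hit (decode n) then piece_prob which f g (decode n) else 0)
                    (seq 0 (S N))).
    - f_equal. apply functional_extensionality; apply cover_term_refine.
    - rewrite (lsum_map (fun p => if hit p then piece_prob which f g p else 0) decode).
      apply lsum_filter. }
  rewrite E, sum_f_R0_lsum.
  apply lsum_group with (V := fun k u => hit (k, u) = true).
  - intros k L ND HL. unfold cover_term, piece_prob, piece; cbn [fst snd].
    destruct (c0 k) as [s|] eqn:Hk.
    + apply (kraft (cylprob which f g) (cylprob_nonneg which f g) (cylprob_split which f g)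
               (list_max (map (@length bool) L))); [exact ND| |].
      * apply (firsthit_prefix_free s). intros u Hu. specialize (HL u Hu).
        unfold hit in HL; cbn [fst snd] in HL; rewrite Hk in HL.
        destruct (excluded_middle_informative _); [assumption | discriminate].
      * intros u Hu. apply le_list_max, in_map, Hu.
    + destruct L as [|u L]; [unfold lsum; simpl; lra|].
      specialize (HL u (or_introl eq_refl)).
      unfold hit in HL; cbn [fst snd] in HL; rewrite Hk in HL. discriminate.
  - apply NoDup_filter, Injective_map_NoDup; [apply decode_inj | apply seq_NoDup].
  - intros p Hp. split.
    + apply in_seq. pose proof (le_list_max _ _ (in_map fst _ _ Hp)). lia.
    + apply filter_In in Hp. destruct p; apply Hp.
Qed.
End Refinement.

(** ** The comparison principle *)

Lemma measure_le_of_frequently w1 w2 f g c (X : Seq -> Prop) : 0 < c ->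
  (forall om, X om -> forall t0, exists t, (t0 <= t)%nat /\
     cylprob w1 f g (prefix om t) <= c * cylprob w2 f g (prefix om t)) ->
  measure w1 f g X <= c * measure w2 f g X.
Proof.
  intros Hc Hfreq. apply measure_compare; [exact Hc|].
  intros x [c0 [Hcov Hsum]].
  set (cond := fun s => cylprob w1 f g s <= c * cylprob w2 f g s).
  set (c1 := refine cond c0).
  destruct (series_bounded (cover_term w1 f g c1) (c * x)) as [y [Hy Hyx]].
  - apply cover_term_nonneg.
  - intros N. destruct (refine_partial_sums cond c0 w2 f g N) as [K HK].
    apply Rle_trans with (c * sum_f_R0 (cover_term w2 f g c1) N).
    + rewrite !sum_f_R0_lsum, <- lsum_scal. apply lsum_le.
      intros n _. apply refine_term_le. intros s Hs; exact Hs.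
    + apply Rmult_le_compat_l; [lra|]. apply Rle_trans with (1 := HK).
      apply sum_incr; [exact Hsum | apply cover_term_nonneg].
  - exists y. split; [|exact Hyx]. exists c1. split; [|exact Hy].
    apply refine_covers; assumption.
Qed.

Theorem proposition2 : error_free derivative_test.
Proof.
  intros f g A _. split; intros eps Heps.
  - apply measure_le_of_frequently; [apply Rdiv_lt_0_compat; lra|].
    intros om [_ [l [Hl Hlt]]] t0.
    destruct (limit_below_frequently _ _ _ Hl Hlt t0) as [t [Ht HD]].
    exists t. split; [exact Ht|]. rewrite derivative_test_hist in HD.
    apply derivative_value_below; auto using cylprob_nonneg.
  - apply measure_le_of_frequently; [apply Rdiv_lt_0_compat; lra|].
    intros om [_ [l [Hl Hgt]]] t0.
    destruct (limit_above_frequently _ _ _ Hl Hgt t0) as [t [Ht HD]].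
    exists t. split; [exact Ht|]. rewrite derivative_test_hist in HD.
    apply derivative_value_above; auto using cylprob_nonneg.
Qed.
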